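(* Let $\Delta\subset\mathbb{R}^n$ be an $n$-dimensional integral polytope containing the origin and having a unique codimension-1 face $\delta$ not containing the origin, with $\Delta$ the convex hull of $\delta$ and the origin. Let $A=\{V_1,\dots,V_J\}\subset\delta\cap\mathbb{Z}^n$ contain all vertices of $\delta$, and let $T=\{\delta_1,\dots,\delta_h\}$ be a regular decomposition of $(\delta,A)$ with associated concave function $\phi:\delta\to\mathbb{R}$. Let $r\in C(\Delta)$ and let $(u_1,\dots,u_J)$ be a rational solution of $\sum_{j=1}^J u_jV_j=r$, $u_j\ge0$, whose non-zero coordinates are $u_{j_1},\dots,u_{j_k}$. If $r\in\Sigma_i$, then $m(\phi,A;r)=\sum_{j=1}^J u_j\phi(V_j)$ if and only if $\Sigma_i$ contains all the lattice points $V_{j_1},\dots,V_{j_k}$.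
   Context: $C(\Delta)$ is the closed cone generated by $\Delta$ and the origin; $w(r)$ is the least $c\ge0$ with $r\in c\Delta$. A regular decomposition of $(\delta,A)$ is a collection of polytopes $\delta_1,\dots,\delta_h$ with vertices in $A$, of full dimension in $\delta$, whose union is $\delta$ and whose pairwise intersections have lower dimension, together with a piecewise linear function $\phi:\delta\to\mathbb{R}$ that is concave ($\phi(tx+(1-t)x')\ge t\phi(x)+(1-t)\phi(x')$) and whose domains of linearity are exactly the $\delta_i$. $\phi$ is extended to $C(\Delta)\setminus\{0\}$ by $\phi(r)=w(r)\phi(r/w(r))$. $\Sigma_i=C(\delta_i)$ is the closed cone generated by $\delta_i$ and the origin. For $r\in C(\Delta)$, $m(\phi,A;r)=\sup\{\sum_{j=1}^J u_j\phi(V_j) : \sum_j u_jV_j=r,\ u_j\ge0\}$. *)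

From HB Require Import structures.
From mathcomp Require Import all_boot all_order all_algebra.
From mathcomp Require Import all_classical all_reals.
Set Implicit Arguments. Unset Strict Implicit. Unset Printing Implicit Defensive.
Import Order.TTheory GRing.Theory Num.Theory.
Local Open Scope classical_set_scope.
Local Open Scope ring_scope.

Section Defs.
Variables (R : realType) (n : nat).
Notation V := ('rV[R]_n).

Definition dotv (c x : V) : R := \sum_(j < n) c ord0 j * x ord0 j.

Definition intvec (x : V) : Prop := forall j, x ord0 j \is a Num.int.

Definition is_rat (x : R) : Prop := exists q : rat, x = ratr q.

Definition conv (S : set V) : set V :=
  [set x | exists (k : nat) (p : 'I_k -> V) (w : 'I_k -> R),
     (forall l, S (p l)) /\ (forall l, 0 <= w l) /\ \sum_l w l = 1 /\
     x = \sum_l w l *: p l].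

Definition polytope (P : set V) : Prop :=
  exists (k : nat) (p : 'I_k -> V), P = conv (range p).

Definition integral_polytope (P : set V) : Prop :=
  exists (k : nat) (p : 'I_k -> V), (forall l, intvec (p l)) /\ P = conv (range p).

Definition convex (K : set V) : Prop :=
  forall x y (t : R), K x -> K y -> 0 <= t -> t <= 1 -> K (t *: x + (1 - t) *: y).

(* faces: intersections with supporting hyperplanes (P itself included) *)
Definition face (P F : set V) : Prop :=
  exists (c : V) (b : R), (forall x, P x -> dotv c x <= b) /\
    F = [set x | P x /\ dotv c x = b].

Definition vertex (P : set V) (v : V) : Prop := face P [set v].

Definition aff_indep (k : nat) (p : 'I_k -> V) : bool :=
  row_free (\matrix_(l < k) row_mx (const_mx 1 : 'rV[R]_1) (p l)).

Definition dim_ge (S : set V) (k : nat) : Prop :=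
  exists p : 'I_k.+1 -> V, (forall l, S (p l)) /\ aff_indep p.

Definition has_dim (S : set V) (k : nat) : Prop := dim_ge S k /\ ~ dim_ge S k.+1.

Definition facet (P F : set V) : Prop := face P F /\ has_dim F n.-1.

Definition cone0 (S : set V) : set V :=
  [set x | exists (t : R) (y : V), 0 <= t /\ (S y \/ y = 0) /\ x = t *: y].

Definition affine_on (phi : V -> R) (K : set V) : Prop :=
  exists (a : V) (b : R), forall x, K x -> phi x = dotv a x + b.

Definition concave_on (delta : set V) (phi : V -> R) : Prop :=
  forall x y (t : R), delta x -> delta y -> 0 <= t -> t <= 1 ->
    t * phi x + (1 - t) * phi y <= phi (t *: x + (1 - t) *: y).

(* domain of linearity of phi on delta: a maximal full-dimensional (in delta,
   i.e. of dimension n-1) convex subset of delta on which phi is affine *)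
Definition lin_domain (delta : set V) (phi : V -> R) (K : set V) : Prop :=
  [/\ K `<=` delta, convex K, has_dim K n.-1, affine_on phi K &
      forall K', K `<=` K' -> K' `<=` delta -> convex K' -> affine_on phi K' -> K' = K].

Definition regular_decomposition (J h : nat) (delta : set V) (A : 'I_J -> V)
    (D : 'I_h -> set V) (phi : V -> R) : Prop :=
  [/\ forall i, [/\ polytope (D i), (forall v, vertex (D i) v -> exists j, v = A j)
                  & has_dim (D i) n.-1],
      (forall x, delta x <-> exists i, D i x),
      (forall i i', i != i' -> ~ dim_ge (D i `&` D i') n.-1),
      concave_on delta phi &
      (forall K, lin_domain delta phi K <-> exists i, K = D i)].

Definition mval (J : nat) (A : 'I_J -> V) (phi : V -> R) (r : V) : R :=
  sup [set s | exists u : 'I_J -> R, (forall j, 0 <= u j) /\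
          \sum_j u j *: A j = r /\ s = \sum_j u j * phi (A j)].

End Defs.

From HB Require Import structures.
From mathcomp Require Import all_boot all_order all_algebra.
From mathcomp Require Import all_classical all_reals.
From mathcomp Require Import topology normedtype derive.
From mathcomp Require Import ring lra.
Set Implicit Arguments. Unset Strict Implicit. Unset Printing Implicit Defensive.
Import Order.TTheory GRing.Theory Num.Theory.
Import numFieldTopology.Exports numFieldNormedType.Exports.
Local Open Scope classical_set_scope.
Local Open Scope ring_scope.

(* Let a . x + b be the affine function that agrees with phi on delta_i.  Since
   delta_i spans the hyperplane c . x = b0 of delta, concavity forces
   phi <= a . x + b on delta, and maximality of the domain of linearity delta_i
   makes it exactly the contact set.  As every V_j lies on that hyperplane, every
   representation r = sum u_j V_j has total weight c . r / b0, so
   sum u_j phi(V_j) <= M := a . r + b (c . r / b0), with equality iff each V_j with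
   u_j <> 0 lies in delta_i.  Finally r, being in the cone over the polytope delta_i,
   is a nonnegative combination of its vertices, which are among the V_j
   (Minkowski, via separation of a point from a finite hull); so M is attained and
   m(phi, A; r) = M. *)

Section DotProduct.
Variables (R : realType) (n : nat).
Implicit Types (c d x y : 'rV[R]_n).

Lemma dotvC x y : dotv x y = dotv y x.
Proof. by apply: eq_bigr => j _; rewrite mulrC. Qed.

Lemma dotvDr c x y : dotv c (x + y) = dotv c x + dotv c y.
Proof. by rewrite /dotv -big_split; apply: eq_bigr => j _; rewrite mxE mulrDr. Qed.

Lemma dotvZr c x a : dotv c (a *: x) = a * dotv c x.
Proof. by rewrite /dotv mulr_sumr; apply: eq_bigr => j _; rewrite mxE mulrCA. Qed.

Lemma dotv0r c : dotv c 0 = 0.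
Proof. by rewrite -(scale0r 0) dotvZr mul0r. Qed.

Lemma dotvNr c x : dotv c (- x) = - dotv c x.
Proof. by rewrite -scaleN1r dotvZr mulN1r. Qed.

Lemma dotvBr c x y : dotv c (x - y) = dotv c x - dotv c y.
Proof. by rewrite dotvDr dotvNr. Qed.

Lemma dotv_sumr c k (F : 'I_k -> 'rV[R]_n) : dotv c (\sum_l F l) = \sum_l dotv c (F l).
Proof. by elim/big_ind2: _ => [|x1 x2 y1 y2 <- <-|//]; rewrite ?dotv0r ?dotvDr. Qed.

Lemma dotvDl c d x : dotv (c + d) x = dotv c x + dotv d x.
Proof. by rewrite dotvC dotvDr !(dotvC x). Qed.

Lemma dotvZl c x a : dotv (a *: c) x = a * dotv c x.
Proof. by rewrite dotvC dotvZr dotvC. Qed.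

Lemma dotvNl c x : dotv (- c) x = - dotv c x.
Proof. by rewrite dotvC dotvNr dotvC. Qed.

Lemma dotvv_ge0 x : 0 <= dotv x x.
Proof. by rewrite sumr_ge0 // => j _; rewrite -expr2 sqr_ge0. Qed.

Lemma dotvv_gt0 x : x != 0 -> 0 < dotv x x.
Proof.
move=> x0; rewrite lt_def dotvv_ge0 andbT; apply: contraNneq x0.
move/eqP; rewrite psumr_eq0 => [/allP x0|j _]; last by rewrite -expr2 sqr_ge0.
apply/eqP/rowP => j; rewrite mxE.
by have := x0 j (mem_index_enum j); rewrite /= mulf_eq0 orbb => /eqP.
Qed.

End DotProduct.

Section Convexity.
Variables (R : realType) (n : nat).
Notation V := 'rV[R]_n.

Lemma convex_sum (K : set V) k (p : 'I_k -> V) (w : 'I_k -> R) : convex K ->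
  (forall l, K (p l)) -> (forall l, 0 <= w l) -> \sum_l w l = 1 ->
  K (\sum_l w l *: p l).
Proof.
move=> cK; elim: k p w => [|k IH] p w Kp w0.
  by rewrite big_ord0 => /eqP; rewrite eq_sym oner_eq0.
rewrite !big_ord_recr /=; set s := \sum_(l < k) _ => w1.
have s0 : 0 <= s by apply: sumr_ge0.
have [s_eq0|s_neq0] := eqVneq s 0.
  have W0 l : w (widen_ord (leqnSn k) l) = 0.
    by move/eqP: s_eq0; rewrite psumr_eq0 // => /allP /(_ l (mem_index_enum l)) /eqP.
  rewrite big1 ?add0r => [|l _]; last by rewrite W0 scale0r.
  by move: w1; rewrite s_eq0 add0r => ->; rewrite scale1r.
have Kz : K (\sum_(l < k) (w (widen_ord (leqnSn k) l) / s) *: p (widen_ord (leqnSn k) l)).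
  apply: IH => [l|l|]; [exact: Kp | exact: divr_ge0 | by rewrite -mulr_suml divff].
have -> : w ord_max = 1 - s by rewrite -w1 addrC addrK.
have := cK _ _ s Kz (Kp ord_max) s0; rewrite -w1 lerDl => /(_ (w0 _)).
rewrite scaler_sumr; congr (K (_ + _)); apply: eq_bigr => l _.
by rewrite scalerA mulrCA divff // mulr1.
Qed.

Lemma conv_convex (S : set V) : convex (conv S).
Proof.
move=> x y t [k1 [p1 [w1 [S1 [w10 [w11 ->]]]]]] [k2 [p2 [w2 [S2 [w20 [w21 ->]]]]]] t0 t1.
pose p i := match fintype.split i with inl a => p1 a | inr b => p2 b end.
pose w i := match fintype.split i with inl a => t * w1 a | inr b => (1 - t) * w2 b end.
have sl (a : 'I_k1) : fintype.split (lshift k2 a) = inl a := unsplitK (inl _ a).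
have sr (b : 'I_k2) : fintype.split (rshift k1 b) = inr b := unsplitK (inr _ b).
exists (k1 + k2)%N, p, w; split; first by move=> i; rewrite /p; case: (fintype.split i).
split; first by move=> i; rewrite /w; case: (fintype.split i) => a; rewrite mulr_ge0 ?subr_ge0.
split; rewrite big_split_ord /p /w.
  under eq_bigr do rewrite sl; under [X in _ + X = _]eq_bigr do rewrite sr.
  by rewrite -!mulr_sumr w11 w21 !mulr1 addrC subrK.
under [X in _ = X + _]eq_bigr do rewrite sl; under [X in _ = _ + X]eq_bigr do rewrite sr.
by rewrite !scaler_sumr; congr (_ + _); apply: eq_bigr => l _; rewrite scalerA.
Qed.

Lemma face_convex (P F : set V) : convex P -> face P F -> convex F.
Proof.
move=> cP [c [b [_ ->]]] x y t [Px cx] [Py cy] t0 t1; split; first exact: cP.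
by rewrite dotvDr !dotvZr cx cy; ring.
Qed.

End Convexity.

Definition fconv (R : realType) n k (Q : 'I_k -> 'rV[R]_n) (T : {set 'I_k}) : set 'rV[R]_n :=
  [set x | exists w : 'I_k -> R, [/\ forall l, 0 <= w l, \sum_l w l = 1,
     forall l, l \notin T -> w l = 0 & x = \sum_l w l *: Q l]].

(* Otherwise moving z slightly towards y would bring it closer to p. *)
Lemma convex_nearest_obtuse (R : realType) n (K : set 'rV[R]_n) p z : convex K -> K z ->
  (forall y, K y -> dotv (z - p) (z - p) <= dotv (y - p) (y - p)) ->
  forall y, K y -> dotv (p - z) (y - z) <= 0.
Proof.
move=> cK Kz zmin y Ky; set d := y - z; set del := dotv (p - z) d.
rewrite leNgt; apply/negP => del0.
have dd0 := dotvv_ge0 d.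
pose t := del / (del + dotv d d).
have t0 : 0 < t by rewrite divr_gt0 // ltr_wpDr.
have t1 : t <= 1 by rewrite ler_pdivrMr ?mul1r ?lerDl ?ltr_wpDr.
have tdd : t * dotv d d <= del by rewrite /t mulrAC ler_pdivrMr ?ltr_wpDr //; nra.
have := zmin _ (cK _ _ t Ky Kz (ltW t0) t1).
have -> : t *: y + (1 - t) *: z - p = (z - p) + t *: d.
  by rewrite /d scalerBr scalerBl scale1r; apply/rowP => j; rewrite !mxE; ring.
have delE : dotv (z - p) d = - del by rewrite /del -opprB dotvNl.
move: delE; set zp := z - p; clearbody zp => delE.
rewrite dotvDr !dotvDl !dotvZr !dotvZl (dotvC d zp) delE.
have := ler_wpM2l (ltW t0) tdd; have := mulr_gt0 t0 del0; nra.
Qed.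

Section FiniteHull.
Variables (R : realType) (n k : nat) (Q : 'I_k -> 'rV[R]_n).
Implicit Types (T : {set 'I_k}) (p x : 'rV[R]_n).

Lemma fconv_convex T : convex (fconv Q T).
Proof.
move=> x y t [v [v0 v1 vT ->]] [w [w0 w1 wT ->]] t0 t1.
exists (fun l => t * v l + (1 - t) * w l); split.
- by move=> l; rewrite addr_ge0 // mulr_ge0 // subr_ge0.
- by rewrite big_split /= -!mulr_sumr v1 w1; ring.
- by move=> l lT; rewrite vT // wT // !mulr0 addr0.
- rewrite !scaler_sumr -big_split; apply: eq_bigr => l _.
  by rewrite [RHS]scalerDl !scalerA.
Qed.

Lemma fconv_mono T1 T2 : T1 \subset T2 -> fconv Q T1 `<=` fconv Q T2.
Proof.
move=> sT x [w [w0 w1 wT ->]]; exists w; split => // l lT2.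
by apply: wT; apply: contra lT2; exact: (fintype.subsetP sT).
Qed.

Lemma fconv_point T l : l \in T -> fconv Q T (Q l).
Proof.
move=> lT; exists (fun m => (m == l)%:R); split.
- by move=> m; rewrite ler0n.
- by rewrite (bigD1 l) //= eqxx big1 ?addr0 // => m /negbTE ->.
- by move=> m; case: eqP => // ->; rewrite lT.
- by rewrite (bigD1 l) //= eqxx scale1r big1 ?addr0 // => m /negbTE ->; rewrite scale0r.
Qed.

Let comb (w : 'rV[R]_k) := \sum_l w ord0 l *: Q l.

Let continuous_affine_form (a : 'I_k -> R) (b : R) :
  continuous (fun w : 'rV[R]_k => \sum_l w ord0 l * a l + b).
Proof.
move=> w; apply: continuousD; last exact: cst_continuous.
suff : continuous (fun w : 'rV[R]_k => \sum_l w ord0 l * a l) by apply.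
apply: continuous_big; first exact: add_continuous.
by move=> l _ x; apply: continuousM; [exact: coord_continuous | exact: cst_continuous].
Qed.

Let continuous_sqdist p : continuous (fun w => dotv (comb w - p) (comb w - p)).
Proof.
have -> : (fun w => dotv (comb w - p) (comb w - p)) =
    (fun w => \sum_j (\sum_l w ord0 l * Q l ord0 j + - p ord0 j) *
                     (\sum_l w ord0 l * Q l ord0 j + - p ord0 j)).
  apply: funext => w; apply: eq_bigr => j _; rewrite !mxE summxE.
  by congr ((_ + _) * (_ + _)); apply: eq_bigr => l _; rewrite mxE.
apply: continuous_big; first exact: add_continuous.
move=> j _ w; have L := @continuous_affine_form (fun l => Q l ord0 j) (- p ord0 j).
exact: continuousM (L w) (L w).
Qed.

(* Minimize over the weight vectors, which form a compact subset of 'rV_k. *)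
Lemma fconv_nearest T l0 p : l0 \in T -> exists2 z, fconv Q T z &
  forall y, fconv Q T y -> dotv (z - p) (z - p) <= dotv (y - p) (y - p).
Proof.
move=> l0T.
pose A l : set R := if l \in T then `[0, 1]%classic else [set 0].
pose W := [set w : 'rV[R]_k | forall l, A l (w ord0 l)] `&`
          ((fun w : 'rV[R]_k => \sum_l w ord0 l * 1 + 0) @^-1` [set 1]).
have inW (w : 'I_k -> R) : (forall l, 0 <= w l) -> \sum_l w l = 1 ->
    (forall l, l \notin T -> w l = 0) -> W (\row_l w l).
  move=> w0 w1 wT; split=> [l|]; last first.
    by rewrite /= addr0 -[RHS]w1; apply: eq_bigr => l _; rewrite mxE mulr1.
  rewrite /A mxE; case: ifPn => [lT|/wT -> //].
  by rewrite /= in_itv /= w0 -w1 (bigD1 l) //= lerDl sumr_ge0.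
have cW : compact W.
  apply: compact_closedI.
    apply: rV_compact => l; rewrite /A; case: ifP => _.
      exact: segment_compact.
    exact: compact_set1.
  apply: preimage_closed; last exact: closed_eq.
  by move=> w _; apply: continuous_affine_form.
have W0 : W !=set0.
  have := fconv_point l0T => -[w [w0 w1 wT _]].
  by exists (\row_l w l); apply: inW.
have [ws /set_mem [wsA wsS] wsmin] :=
  EVT_min_rV W0 cW (continuous_subspaceT (@continuous_sqdist p)).
exists (comb ws).
  exists (fun l => ws ord0 l); split.
  - move=> l; have := wsA l; rewrite /A; case: ifP => _; last by move=> ->.
    by rewrite /= in_itv /= => /andP[].
  - by rewrite -[RHS]wsS /= addr0; apply: eq_bigr => l _; rewrite mulr1.
  - by move=> l lT; have := wsA l; rewrite /A (negbTE lT).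
  - by [].
move=> _ [w [w0 w1 wT ->]].
have := wsmin _ (mem_set (inW _ w0 w1 wT)); rewrite /comb.
by under [X in _ <= dotv (X - _) (X - _) -> _]eq_bigr do rewrite mxE.
Qed.

Lemma fconv_separation T p :
  ~ fconv Q T p -> exists c, forall l, l \in T -> dotv c (Q l) < dotv c p.
Proof.
move=> npT; have [->|[l0 l0T]] := set_0Vmem T; first by exists 0 => l; rewrite inE.
have [z Tz zmin] := fconv_nearest p l0T.
have obtuse := convex_nearest_obtuse (@fconv_convex T) Tz zmin.
have pz : p - z != 0 by apply: contra_not_neq npT => /eqP; rewrite subr_eq0 => /eqP ->.
exists (p - z) => l lT; have := obtuse _ (fconv_point lT).
rewrite dotvBr subr_le0 => /le_lt_trans; apply.
by rewrite -subr_gt0 -dotvBr dotvv_gt0.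
Qed.

End FiniteHull.

Section Minkowski.
Variables (R : realType) (n k : nat) (Q : 'I_k -> 'rV[R]_n).
Implicit Types (T : {set 'I_k}).
Local Notation fullT := [set: 'I_k]%SET.

Lemma fconv_elim T l : l \in T -> fconv Q (T :\ l) (Q l) ->
  fconv Q T `<=` fconv Q (T :\ l).
Proof.
move=> lT [v [v0 v1 vT vE]] x [w [w0 w1 wT ->]].
exists (fun m => (if m == l then 0 else w m) + w l * v m); split.
- by move=> m; rewrite addr_ge0 ?mulr_ge0 //; case: ifP.
- rewrite big_split /= -mulr_sumr v1 mulr1 (bigD1 l) //= eqxx add0r.
  rewrite -w1 [RHS](bigD1 l) //= addrC; congr (_ + _).
  by apply: eq_bigr => m /negbTE ->.
- move=> m; rewrite !inE negb_and negbK => /orP[/eqP ->|mT].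
    by rewrite eqxx add0r vT ?mulr0 // !inE eqxx.
  by rewrite wT // vT ?mulr0 ?addr0 ?if_same // !inE negb_and mT orbT.
- under [RHS]eq_bigr do rewrite scalerDl; rewrite big_split /=.
  rewrite (bigD1 l) //= [in RHS](bigD1 l) //= eqxx scale0r add0r addrC.
  congr (_ + _); first by apply: eq_bigr => m /negbTE ->.
  by rewrite vE scaler_sumr; apply: eq_bigr => m _; rewrite scalerA.
Qed.

(* A point outside the hull of the others is exposed by a separating functional. *)
Lemma fconv_vertex T l : l \in T -> ~ fconv Q (T :\ l) (Q l) ->
  vertex (fconv Q T) (Q l).
Proof.
move=> lT nl; have [c cH] := fconv_separation nl; set b := dotv c (Q l).
have cQ m : m \in T -> m != l -> dotv c (Q m) < b by move=> mT ml; rewrite cH // !inE ml.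
have le m (w : 'I_k -> R) : 0 <= w m -> (m \notin T -> w m = 0) ->
    w m * dotv c (Q m) <= w m * b.
  move=> w0 wT; have [->|ml] := eqVneq m l; first by [].
  have [mT|/wT -> //] := boolP (m \in T); first by rewrite ler_wpM2l // ltW // cQ.
  by rewrite !mul0r.
exists c, b; split.
  move=> x [w [w0 w1 wT ->]]; rewrite dotv_sumr -[b]mul1r -w1 mulr_suml.
  by apply: ler_sum => m _; rewrite dotvZr; exact: le (w0 m) (wT m).
apply/seteqP; split => x /=; first by move=> ->; split => //; apply: fconv_point.
move=> [[w [w0 w1 wT ->]]]; rewrite dotv_sumr => E.
have Z m : w m * (b - dotv c (Q m)) = 0.
  have S : \sum_m w m * (b - dotv c (Q m)) = 0.
    under eq_bigr do rewrite mulrBr.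
    by rewrite sumrB -mulr_suml w1 mul1r -E; under eq_bigr do rewrite dotvZr; rewrite subrr.
  move/eqP: S; rewrite psumr_eq0 => [/allP/(_ m (mem_index_enum m))/eqP //|j _].
  by rewrite mulrBr subr_ge0; exact: le (w0 j) (wT j).
have W0 m : m != l -> w m = 0.
  move=> ml; have [mT|/wT //] := boolP (m \in T).
  have /eqP := Z m; rewrite mulf_eq0 subr_eq0 => /orP[/eqP //|/eqP bE].
  by move: (cQ m mT ml); rewrite -bE ltxx.
have wl : w l = 1 by rewrite -w1 (bigD1 l) //= big1 ?addr0 // => m /W0.
by rewrite (bigD1 l) //= wl scale1r big1 ?addr0 // => m /W0 ->; rewrite scale0r.
Qed.

(* Discard points lying in the hull of the remaining ones; those left are vertices. *)
Lemma fconv_vertices : exists2 T : {set 'I_k},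
  (forall l, l \in T -> vertex (fconv Q fullT) (Q l)) & fconv Q fullT `<=` fconv Q T.
Proof.
suff: forall m (T : {set 'I_k}), (#|T| <= m)%N -> fconv Q fullT `<=` fconv Q T ->
    exists2 T' : {set 'I_k},
    (forall l, l \in T' -> vertex (fconv Q fullT) (Q l)) & fconv Q fullT `<=` fconv Q T'.
  by apply; [exact: leqnn | exact: subset_refl].
elim=> [|m IH] T cT sub.
  by exists T => // l lT; move: cT; rewrite (cardsD1 l T) lT.
have [[l [lT lc]]|nol] := pselect (exists l, l \in T /\ fconv Q (T :\ l) (Q l)).
  apply: (IH (T :\ l)); first by move: cT; rewrite (cardsD1 l T) lT.
  exact: subset_trans sub (fconv_elim lT lc).
have -> : fconv Q fullT = fconv Q T.
  by apply/seteqP; split => //; apply: fconv_mono; exact: finset.subsetT.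
by exists T => // l lT; apply: fconv_vertex => // lc; apply: nol; exists l.
Qed.

End Minkowski.

Lemma combination_reindex (R : realType) n k J (p : 'I_k -> 'rV[R]_n)
    (A : 'I_J -> 'rV[R]_n) (w : 'I_k -> R) :
  (forall m, 0 <= w m) -> (forall m, w m != 0 -> exists j, p m = A j) ->
  exists w' : 'I_J -> R, [/\ forall j, 0 <= w' j, \sum_j w' j = \sum_m w m,
    \sum_j w' j *: A j = \sum_m w m *: p m &
    forall j, w' j != 0 -> exists2 m, w m != 0 & p m = A j].
Proof.
move=> w0 pA; have [[m0 wm0]|w_eq0] := pselect (exists m, w m != 0); last first.
  have {}w_eq0 m : w m = 0 by apply: contra_notP w_eq0 => wm; exists m; apply/eqP.
  exists (fun=> 0); split => // [||j]; last by rewrite eqxx.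
    by rewrite !big1.
  by rewrite !big1 // => m _; rewrite ?w_eq0 scale0r.
have [j0 _] := pA m0 wm0.
pose g m := if pselect (exists j, p m = A j) is left e then sval (cid e) else j0.
have gP m : w m != 0 -> p m = A (g m).
  by move=> wm; rewrite /g; case: pselect => [e|[]]; [exact: (svalP (cid e)) | exact: pA].
exists (fun j => \sum_(m | g m == j) w m); split.
- by move=> j; apply: sumr_ge0.
- by rewrite [RHS](partition_big g predT).
- rewrite [RHS](partition_big g predT) //; apply: eq_bigr => j _.
  rewrite scaler_suml; apply: eq_bigr => m /eqP <-.
  by have [->|/gP ->] := eqVneq (w m) 0; rewrite ?scale0r.
- move=> j nz; have [m /eqP gm wm] : exists2 m, g m == j & w m != 0.
    apply/exists_inP; apply: contraNT nz => /exists_inPn wj.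
    by rewrite big1 // => m /wj /negPn /eqP.
  by exists m => //; rewrite -gm; apply: gP.
Qed.

Lemma conv_range_fconv (R : realType) n k (Q : 'I_k -> 'rV[R]_n) :
  conv (range Q) = fconv Q [set: 'I_k]%SET.
Proof.
apply/seteqP; split => x; last first.
  by move=> [w [w0 w1 _ ->]]; exists k, Q, w; split => //; split => //; split.
move=> [k' [p [w [pQ [w0 [w1 ->]]]]]].
have pQ' m : w m != 0 -> exists l, p m = Q l by case: (pQ m) => l _ <-; exists l.
have [w' [w'0 w'1 w'E _]] := combination_reindex w0 pQ'.
by exists w'; split => //; [rewrite w'1 | move=> l; rewrite inE].
Qed.

(* The rows [1, q l] are independent and lie in the kernel of the column
   [-b0; c^T], which has dimension n; hence they span it, and [1, x] lies in it. *)
Lemma hyperplane_affine_combination (R : realType) n (q : 'I_n -> 'rV[R]_n)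
    (c x : 'rV[R]_n) b0 :
  aff_indep q -> c != 0 -> (forall l, dotv c (q l) = b0) -> dotv c x = b0 ->
  exists al : 'I_n -> R, \sum_l al l = 1 /\ x = \sum_l al l *: q l.
Proof.
move=> /eqP rkM c0 cq cx.
set M := \matrix_(l < n) row_mx (const_mx 1 : 'rV[R]_1) (q l) in rkM.
pose w : 'M[R]_(1 + n, 1) := col_mx (const_mx (- b0)) c^T.
have ker_w y : dotv c y = b0 -> row_mx (const_mx 1 : 'rV[R]_1) y *m w = 0.
  move=> cy; rewrite /w mul_row_col; apply/matrixP => ? ?.
  rewrite !ord1 !mxE big_ord1 !mxE mul1r -cy addrC; apply/eqP; rewrite subr_eq0; apply/eqP.
  by apply: eq_bigr => j _; rewrite !mxE mulrC.
have rkw : \rank w = 1%N.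
  apply/eqP; rewrite eqn_leq rank_leq_col lt0n mxrank_eq0.
  apply: contra c0 => /eqP w0; apply/eqP/rowP => j.
  by have := congr1 (fun A : 'M_(1 + n, 1) => A (rshift 1 j) ord0) w0; rewrite col_mxEd !mxE.
have sMK : (M <= kermx w)%MS.
  by apply/sub_kermxP/row_matrixP => l; rewrite row_mul rowK row0; apply: ker_w.
have KM : (kermx w <= M)%MS.
  by rewrite -(mxrank_leqif_sup sMK).2 mxrank_ker rkw rkM add1n subn1.
have /submxP [Dm xD] : (row_mx (const_mx 1) x <= M)%MS.
  by apply: submx_trans KM; apply/sub_kermxP; apply: ker_w.
have Ment l j : M l j = row_mx (const_mx 1 : 'rV[R]_1) (q l) ord0 j by rewrite /M [LHS]mxE.
exists (fun l => Dm ord0 l); split.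
  have := congr1 (fun A : 'rV_(1 + n) => A ord0 (lshift n ord0)) xD.
  rewrite row_mxEl mxE [RHS]mxE => ->.
  by apply: eq_bigr => l _; rewrite Ment row_mxEl mxE mulr1.
apply/rowP => j; have := congr1 (fun A : 'rV_(1 + n) => A ord0 (rshift 1 j)) xD.
rewrite row_mxEr [RHS]mxE => ->; rewrite summxE.
by apply: eq_bigr => l _; rewrite Ment row_mxEr mxE.
Qed.

Section ConcaveMajorant.
Variables (R : realType) (n : nat).
Notation V := 'rV[R]_n.

(* y is the reflection of x through the barycenter of the q l, scaled by an s small
   enough that its barycentric weights stay nonnegative. *)
Lemma convex_extrapolate (K : set V) k (q : 'I_k.+1 -> V) (al : 'I_k.+1 -> R) x :
  convex K -> (forall l, K (q l)) -> \sum_l al l = 1 -> x = \sum_l al l *: q l ->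
  exists y t, [/\ K y, 0 <= t < 1 & K (t *: y + (1 - t) *: x)].
Proof.
move=> cK Kq al1 xE.
pose beta : R := k.+1%:R^-1.
have beta0 : 0 < beta by rewrite invr_gt0 ltr0n.
have sbeta : \sum_(l < k.+1) beta = 1 by rewrite sumr_const card_ord -mulr_natl divff ?pnatr_eq0.
pose A := \sum_l `|al l|.
have A0 : 0 <= A by rewrite sumr_ge0.
pose s := beta / (1 + A).
have s0 : 0 < s by rewrite divr_gt0 // ltr_wpDr.
pose pp := \sum_l beta *: q l.
pose y := \sum_l (beta + s * (beta - al l)) *: q l.
have Kpp : K pp by apply: convex_sum => // l; exact: ltW.
have Ky : K y.
  apply: convex_sum => // [l|]; last first.
    by rewrite big_split /= sbeta -mulr_sumr sumrB sbeta al1 subrr mulr0 addr0.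
  have alA : al l <= A by rewrite (le_trans (ler_norm _)) // /A (bigD1 l) //= lerDl sumr_ge0.
  have sAb : s * A <= beta by rewrite /s mulrAC ler_pdivrMr ?ltr_wpDr //; nra.
  have := ler_wpM2l (ltW s0) alA; nra.
have t1 : 0 < 1 + s by rewrite ltr_wpDr // ltW.
exists y, (1 + s)^-1; split => //.
  by rewrite invr_ge0 ltW //= invf_lt1 // ltrDl.
suff -> : (1 + s)^-1 *: y + (1 - (1 + s)^-1) *: x = pp by [].
have yE : y = pp + s *: (pp - x).
  rewrite /y xE /pp -sumrB scaler_sumr -big_split /=.
  by apply: eq_bigr => l _; rewrite scalerDl -scalerBl scalerA.
by rewrite yE; apply/rowP => j; rewrite !mxE; field; rewrite gt_eqF.
Qed.

Lemma concave_le_affine (delta K : set V) (phi : V -> R) a b k (q : 'I_k.+1 -> V) x :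
  concave_on delta phi -> convex K -> K `<=` delta ->
  (forall y, K y -> phi y = dotv a y + b) -> (forall l, K (q l)) -> delta x ->
  (exists al : 'I_k.+1 -> R, \sum_l al l = 1 /\ x = \sum_l al l *: q l) ->
  phi x <= dotv a x + b.
Proof.
move=> phic cK sK aff Kq dx [al [al1 xE]].
have [y [t [Ky /andP[t0 t1] Kz]]] := convex_extrapolate cK Kq al1 xE.
have := phic y x t (sK _ Ky) dx t0 (ltW t1).
rewrite (aff _ Kz) (aff _ Ky) dotvDr !dotvZr.
have : 0 < 1 - t by rewrite subr_gt0.
nra.
Qed.

End ConcaveMajorant.

Section AffineMajorant.
Variables (R : realType) (n J : nat) (A : 'I_J -> 'rV[R]_n) (phi : 'rV[R]_n -> R).
Variables (c a : 'rV[R]_n) (b0 b : R).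
Hypotheses (b0_neq0 : b0 != 0) (cA : forall j, dotv c (A j) = b0).
Hypothesis phi_le : forall j, phi (A j) <= dotv a (A j) + b.

(* Every representation of r has total weight c . r / b0. *)
Lemma affine_combination_value (u : 'I_J -> R) r : \sum_j u j *: A j = r ->
  \sum_j u j * (dotv a (A j) + b) = dotv a r + b * (dotv c r / b0).
Proof.
move=> <-; rewrite !dotv_sumr; under eq_bigr do rewrite mulrDr.
rewrite big_split /= -mulr_suml mulrC; congr (_ + _ * _).
  by apply: eq_bigr => j _; rewrite dotvZr.
by rewrite mulr_suml; apply: eq_bigr => j _; rewrite dotvZr cA mulfK.
Qed.

Lemma combination_value_le (u : 'I_J -> R) r : (forall j, 0 <= u j) ->
  \sum_j u j *: A j = r -> \sum_j u j * phi (A j) <= dotv a r + b * (dotv c r / b0).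
Proof.
move=> u0 ur; rewrite -(affine_combination_value ur); apply: ler_sum => j _.
exact: ler_wpM2l.
Qed.

Lemma combination_value_eq (u : 'I_J -> R) r : (forall j, 0 <= u j) ->
  \sum_j u j *: A j = r ->
  \sum_j u j * phi (A j) = dotv a r + b * (dotv c r / b0) <->
  (forall j, u j != 0 -> phi (A j) = dotv a (A j) + b).
Proof.
move=> u0 ur; rewrite -(affine_combination_value ur); split => [E j uj|supp].
  have /eqP : \sum_j u j * ((dotv a (A j) + b) - phi (A j)) = 0.
    by under eq_bigr do rewrite mulrBr; rewrite sumrB -E subrr.
  rewrite psumr_eq0 => [/allP/(_ j (mem_index_enum j))|j' _]; last first.
    by rewrite mulr_ge0 // subr_ge0.
  by rewrite mulf_eq0 (negbTE uj) subr_eq0 => /eqP ->.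
apply: eq_bigr => j _; have [->|/supp ->] := eqVneq (u j) 0; by rewrite ?mul0r.
Qed.

Lemma mval_affine_majorant r :
  (exists u : 'I_J -> R, [/\ forall j, 0 <= u j, \sum_j u j *: A j = r &
     forall j, u j != 0 -> phi (A j) = dotv a (A j) + b]) ->
  mval A phi r = dotv a r + b * (dotv c r / b0).
Proof.
move=> [u [u0 ur supp]]; rewrite /mval; set M := _ + _; set S := [set s | _].
have SM : S M by exists u; split => //; split => //; apply/esym/(combination_value_eq u0 ur).
have ubM : ubound S M by move=> _ [v [v0 [vr ->]]]; apply: combination_value_le.
by apply/eqP; rewrite eq_le ge_sup ?ub_le_sup //; exists M.
Qed.

End AffineMajorant.

Section Cones.
Variables (R : realType) (n : nat).
Notation V := 'rV[R]_n.

Lemma cone0_hyperplane (K : set V) c b0 x : b0 != 0 ->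
  (forall y, K y -> dotv c y = b0) -> cone0 K x -> dotv c x = b0 -> K x.
Proof.
move=> b00 cK [t [y [t0 [[Ky|->] ->]]]].
  rewrite dotvZr cK // => /eqP; rewrite -{2}[b0]mul1r (inj_eq (mulIf b00)) => /eqP ->.
  by rewrite scale1r.
by rewrite scaler0 dotv0r => /eqP; rewrite eq_sym (negbTE b00).
Qed.

Lemma cone0_polytope_combination (K : set V) J (A : 'I_J -> V) r : polytope K ->
  (forall v, vertex K v -> exists j, v = A j) -> cone0 K r ->
  exists u : 'I_J -> R, [/\ forall j, 0 <= u j, \sum_j u j *: A j = r &
    forall j, u j != 0 -> K (A j)].
Proof.
move=> [k [Q KQ]] vA [t [y [t0 [[Ky|->] ->]]]]; last first.
  exists (fun=> 0); split => // [|j]; last by rewrite eqxx.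
  by rewrite scaler0 big1 // => j _; rewrite scale0r.
rewrite conv_range_fconv in KQ; have [T Tv Tsub] := fconv_vertices Q.
rewrite -KQ in Tv Tsub; have [w [w0 w1 wT yE]] := Tsub _ Ky.
have QA m : w m != 0 -> exists j, Q m = A j.
  move=> wm; have [|j ->] := vA _ (Tv m _); last by exists j.
  by apply: contraNT wm => /wT ->.
have [w' [w'0 _ w'E w'A]] := combination_reindex w0 QA.
exists (fun j => t * w' j); split.
- by move=> j; rewrite mulr_ge0.
- by rewrite yE -w'E scaler_sumr; apply: eq_bigr => j _; rewrite scalerA.
- move=> j; rewrite mulf_eq0 negb_or => /andP[_ /w'A[m _ <-]].
  by rewrite KQ; apply: fconv_point; rewrite inE.
Qed.

End Cones.

Lemma lin_domain_majorant (R : realType) n (delta K : set 'rV[R]_n.+1)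
    (phi : 'rV[R]_n.+1 -> R) c b0 :
  b0 != 0 -> (forall x, delta x -> dotv c x = b0) -> convex delta ->
  concave_on delta phi -> lin_domain delta phi K ->
  exists a b, (forall x, delta x -> phi x <= dotv a x + b) /\
    (forall x, delta x -> K x <-> phi x = dotv a x + b).
Proof.
move=> b00 dc dconv phic [sK cK [[q [Kq qi]] _] [a [b aff]] Kmax].
have c0 : c != 0.
  by apply: contra_neq b00 => c0; rewrite -(dc _ (sK _ (Kq ord0))) c0 dotvC dotv0r.
have le x : delta x -> phi x <= dotv a x + b.
  move=> dx; apply: (concave_le_affine phic cK sK aff Kq dx).
  exact: hyperplane_affine_combination qi c0 (fun l => dc _ (sK _ (Kq l))) (dc x dx).
exists a, b; split => // x dx; split; first exact: aff.
suff <- : [set x | delta x /\ phi x = dotv a x + b] = K by [].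
apply: Kmax => [y Ky|y []//|y z t [dy py] [dz pz] t0 t1|]; last by exists a, b => y [].
  by split; [exact: sK | exact: aff].
split; first exact: dconv.
apply/eqP; rewrite eq_le le ?andbT; last exact: dconv.
by have := phic y z t dy dz t0 t1; rewrite py pz dotvDr !dotvZr; lra.
Qed.

Unset Implicit Arguments.

Theorem mainTheorem2 (R : realType) (n : nat) (Delta delta : set 'rV[R]_n)
    (J : nat) (V : 'I_J -> 'rV[R]_n) (h : nat) (D : 'I_h -> set 'rV[R]_n)
    (phi : 'rV[R]_n -> R) (r : 'rV[R]_n) (u : 'I_J -> R) (i : 'I_h) :
  integral_polytope Delta -> has_dim Delta n -> Delta 0 ->
  facet Delta delta -> ~ delta 0 ->
  (forall F, facet Delta F -> ~ F 0 -> F = delta) ->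
  Delta = conv (delta `|` [set 0]) ->
  injective V -> (forall j, delta (V j) /\ intvec (V j)) ->
  (forall v, vertex delta v -> exists j, V j = v) ->
  regular_decomposition delta V D phi ->
  cone0 Delta r ->
  (forall j, is_rat (u j)) -> (forall j, 0 <= u j) -> \sum_j u j *: V j = r ->
  cone0 (D i) r ->
  (mval V phi r = \sum_j u j * phi (V j) <->
     (forall j, u j != 0 -> cone0 (D i) (V j))).
Proof.
case: n Delta delta V D phi r u i => [|n] Delta delta V D phi r u i _ _ D0
  [fD [[p [pd _]] _]] nd0 _ DE _ Vd _ [Dpoly _ _ phic Dlin] _ _ u0 ur ri.
  by move: (pd ord0); rewrite (thinmx0 (p ord0)).
have [c [b0 [_ dE]]] := fD.
have dc x : delta x -> dotv c x = b0 by rewrite dE => -[].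
have b00 : b0 != 0.
  by apply/eqP => b00; apply: nd0; rewrite dE; split; rewrite ?dotv0r.
have dconv : convex delta by apply: face_convex fD; rewrite DE; apply: conv_convex.
have Di_lin : lin_domain delta phi (D i) by apply/Dlin; exists i.
have [sD _ _ _ _] := Di_lin.
have [a [b [phi_le Dphi]]] := lin_domain_majorant b00 dc dconv phic Di_lin.
have dV j : delta (V j) := (Vd j).1.
have cV j : dotv c (V j) = b0 := dc _ (dV j).
have phiV j : phi (V j) <= dotv a (V j) + b := phi_le _ (dV j).
have DiV j : cone0 (D i) (V j) <-> phi (V j) = dotv a (V j) + b.
  apply: iff_trans _ (Dphi _ (dV j)); split.
    by move=> cDx; apply: (cone0_hyperplane b00 _ cDx (cV j)) => y /sD /dc.
  by move=> Dj; exists 1, (V j); rewrite scale1r; split => //; split; first left.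
have [Di_poly Di_vert _] := Dpoly i.
have [w [w0 wr wD]] := cone0_polytope_combination Di_poly Di_vert ri.
rewrite (mval_affine_majorant b00 cV phiV); last first.
  by exists w; split => // j /wD /Dphi; apply; apply: dV.
have value_eq := combination_value_eq b00 cV phiV u0 ur.
split => [/esym/value_eq supp j /supp/DiV //|supp].
by apply/esym/value_eq => j /supp/DiV.
Qed.
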